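(* Let $A\in\mathfrak{H}_n$, $B\in\mathfrak{M}_n$, $N\in\mathbb{N}$. Then \[ \sum_{(k_1,\dots,k_N)\in\{1,\dots,l\}^N}\|M_{k_1,\dots,k_N}\|\le n\,e^{n\|B\|}. \]
   Context: Let $\lambda_1,\dots,\lambda_l$ be the distinct eigenvalues of the Hermitian matrix $A$ and $E_{\lambda_1},\dots,E_{\lambda_l}$ the corresponding orthogonal spectral projectors ($AE_{\lambda_j}=\lambda_jE_{\lambda_j}$, $\sum_j E_{\lambda_j}=I_n$). For $(k_1,\dots,k_N)\in\{1,\dots,l\}^N$, $M_{k_1,\dots,k_N}=E_{\lambda_{k_1}}e^{B/N}E_{\lambda_{k_2}}e^{B/N}\cdots E_{\lambda_{k_N}}e^{B/N}$. $\|\cdot\|$ is the operator norm. *)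

From Stdlib Require Import Arith Reals List Lra ClassicalEpsilon.
Import ListNotations.
Open Scope R_scope.

Definition C : Type := (R * R)%type.
Definition C0 : C := (0, 0).
Definition C1 : C := (1, 0).
Definition RtoC (r : R) : C := (r, 0).
Definition Cadd (z w : C) : C := (fst z + fst w, snd z + snd w).
Definition Cmul (z w : C) : C :=
  (fst z * fst w - snd z * snd w, fst z * snd w + snd z * fst w).
Definition Cconj (z : C) : C := (fst z, - snd z).
Definition Cnorm2 (z : C) : R := fst z * fst z + snd z * snd z.

Definition Csum (m : nat) (f : nat -> C) : C :=
  fold_right (fun k acc => Cadd (f k) acc) C0 (seq 0 m).
Definition Rsum (m : nat) (f : nat -> R) : R :=
  fold_right (fun k acc => f k + acc) 0 (seq 0 m).

(* ---------- vectors in C^n and n x n matrices (only indices < n matter) ---------- *)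
Definition Vec : Type := nat -> C.
Definition Mat : Type := nat -> nat -> C.

Definition Meq (n : nat) (A B : Mat) : Prop :=
  forall i j, (i < n)%nat -> (j < n)%nat -> A i j = B i j.

Definition Mid : Mat := fun i j => if Nat.eqb i j then C1 else C0.
Definition Mmul (n : nat) (A B : Mat) : Mat :=
  fun i j => Csum n (fun k => Cmul (A i k) (B k j)).
Definition Mscale (c : C) (A : Mat) : Mat := fun i j => Cmul c (A i j).
Definition Madd (A B : Mat) : Mat := fun i j => Cadd (A i j) (B i j).
Definition Msum (m : nat) (F : nat -> Mat) : Mat :=
  fun i j => Csum m (fun k => F k i j).
Definition Madj (A : Mat) : Mat := fun i j => Cconj (A j i).
Fixpoint Mpow (n : nat) (A : Mat) (k : nat) : Mat :=
  match k with
  | O => Mid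
  | S k' => Mmul n A (Mpow n A k')
  end.

Definition hermitian (n : nat) (A : Mat) : Prop := Meq n (Madj A) A.

Definition exp_partial (n : nat) (B : Mat) (m : nat) : Mat :=
  Msum (S m) (fun k => Mscale (RtoC (/ INR (Factorial.fact k))) (Mpow n B k)).

Definition Rlim (u : nat -> R) : R := epsilon (inhabits 0) (fun l => Un_cv u l).

Definition mexp (n : nat) (B : Mat) : Mat :=
  fun i j => (Rlim (fun m => fst (exp_partial n B m i j)),
              Rlim (fun m => snd (exp_partial n B m i j))).

Definition vnorm (n : nat) (x : Vec) : R := sqrt (Rsum n (fun i => Cnorm2 (x i))).
Definition Mapply (n : nat) (A : Mat) (x : Vec) : Vec :=
  fun i => Csum n (fun k => Cmul (A i k) (x k)).

Definition opnorm (n : nat) (A : Mat) : R :=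
  epsilon (inhabits 0)
    (is_lub (fun r => exists x : Vec, vnorm n x <= 1 /\ r = vnorm n (Mapply n A x))).

(* ---------- multi-indices (k_1,...,k_N) in {0,...,l-1}^N and M_{k_1..k_N} ---------- *)
Fixpoint all_tuples (l N : nat) : list (list nat) :=
  match N with
  | O => nil :: nil
  | S N' => flat_map (fun k => map (cons k) (all_tuples l N')) (seq 0 l)
  end.

(* M_{k_1,...,k_N} = E_{k_1} X E_{k_2} X ... E_{k_N} X   with X = e^{B/N} *)
Definition Mword (n : nat) (E : nat -> Mat) (X : Mat) (ks : list nat) : Mat :=
  fold_right (fun k P => Mmul n (Mmul n (E k) X) P) Mid ks.

Definition sum_norms (n l : nat) (E : nat -> Mat) (X : Mat) (N : nat) : R :=
  fold_right (fun ks acc => opnorm n (Mword n E X ks) + acc) 0 (all_tuples l N).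

(* Write X = e^(B/N) and b = |B/N|.  Since E_b is idempotent, M_(a,b,...) = (E_a X E_b) M_(b,...),
   and E_a X E_b = delta_ab E_a + E_a (X - 1) E_b has norm at most delta_ab + (e^b - 1).
   Summing over the words then becomes iterating a transfer matrix with row sums
   1 + l (e^b - 1) <= e^(l b), which gives the bound l e^b e^(l b (N - 1)) <= l e^(l |B|).
   Finally l <= n, since the traces of the nonzero projections E_j are >= 1 and add up to n. *)

From Stdlib Require Import Arith Reals List Lra Lia ClassicalEpsilon Ring FunctionalExtensionality.
Import ListNotations.
Open Scope R_scope.

Lemma C_ext (z w : C) : fst z = fst w -> snd z = snd w -> z = w.
Proof. destruct z, w; simpl; intros; subst; reflexivity. Qed.

Definition Copp (z : C) : C := (- fst z, - snd z).
Definition Csub (z w : C) : C := Cadd z (Copp w).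

Lemma C_ring_theory : ring_theory C0 C1 Cadd Cmul Csub Copp (@eq C).
Proof.
  constructor; intros; apply C_ext; destruct x; try destruct y; try destruct z;
    unfold Cadd, Cmul, Csub, Copp, C0, C1; simpl; ring.
Qed.
Add Ring C_ring : C_ring_theory.

Lemma Cconj_mul a b : Cconj (Cmul a b) = Cmul (Cconj a) (Cconj b).
Proof. apply C_ext; simpl; ring. Qed.

Definition cabs (z : C) : R := sqrt (Cnorm2 z).

Lemma Cnorm2_nonneg z : 0 <= Cnorm2 z.
Proof. unfold Cnorm2. apply Rplus_le_le_0_compat; apply Rle_0_sqr. Qed.

Lemma Cnorm2_pos z : z <> C0 -> 0 < Cnorm2 z.
Proof.
  destruct z as [a b]; intros Hz; unfold Cnorm2; simpl.
  destruct (Req_dec a 0), (Req_dec b 0); subst; try (exfalso; apply Hz; reflexivity);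
    [assert (0 < b * b) | assert (0 < a * a) ..]; try (apply Rsqr_pos_lt; assumption); nra.
Qed.

Lemma cabs_RtoC r : cabs (RtoC r) = Rabs r.
Proof. unfold cabs, Cnorm2, RtoC; simpl. rewrite Rmult_0_r, Rplus_0_r. apply sqrt_Rsqr_abs. Qed.

Lemma cabs_inv_fact j : cabs (RtoC (/ INR (fact j))) = / INR (fact j).
Proof. rewrite cabs_RtoC. apply Rabs_pos_eq. left; apply Rinv_0_lt_compat, INR_fact_lt_0. Qed.

Lemma Rabs_fst_le_cabs z : Rabs (fst z) <= cabs z.
Proof.
  unfold cabs, Cnorm2. rewrite <- sqrt_Rsqr_abs. apply sqrt_le_1_alt.
  unfold Rsqr. assert (0 <= snd z * snd z) by apply Rle_0_sqr. lra.
Qed.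

Lemma Rabs_snd_le_cabs z : Rabs (snd z) <= cabs z.
Proof.
  unfold cabs, Cnorm2. rewrite <- sqrt_Rsqr_abs. apply sqrt_le_1_alt.
  unfold Rsqr. assert (0 <= fst z * fst z) by apply Rle_0_sqr. lra.
Qed.

(** * Finite sums *)

Lemma Rsum_S m f : Rsum (S m) f = Rsum m f + f m.
Proof.
  unfold Rsum. rewrite seq_S, fold_right_app. simpl.
  generalize (f m); intro r. induction (seq 0 m) as [|a s IH]; simpl; [ring|].
  rewrite IH. ring.
Qed.

Lemma Csum_S m f : Csum (S m) f = Cadd (Csum m f) (f m).
Proof.
  unfold Csum. rewrite seq_S, fold_right_app. simpl.
  generalize (f m); intro r. induction (seq 0 m) as [|a s IH]; simpl; [ring|].
  rewrite IH. ring.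
Qed.

Lemma Rsum_shift m f : Rsum (S m) f = f 0%nat + Rsum m (fun k => f (S k)).
Proof. induction m; [unfold Rsum; simpl; ring|]. rewrite Rsum_S, IHm, Rsum_S. ring. Qed.

Lemma Csum_shift m f : Csum (S m) f = Cadd (f 0%nat) (Csum m (fun k => f (S k))).
Proof. induction m; [unfold Csum; simpl; ring|]. rewrite Csum_S, IHm, Csum_S. ring. Qed.

Lemma Rsum_ext m f g : (forall k, (k < m)%nat -> f k = g k) -> Rsum m f = Rsum m g.
Proof. induction m; intros H; auto. rewrite !Rsum_S, IHm, H; auto. Qed.

Lemma Csum_ext m f g : (forall k, (k < m)%nat -> f k = g k) -> Csum m f = Csum m g.
Proof. induction m; intros H; auto. rewrite !Csum_S, IHm, H; auto. Qed.

Lemma Rsum_le m f g : (forall k, (k < m)%nat -> f k <= g k) -> Rsum m f <= Rsum m g.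
Proof.
  induction m; intros H; [unfold Rsum; simpl; lra|]. rewrite !Rsum_S.
  apply Rplus_le_compat; [apply IHm; auto | apply H; lia].
Qed.


Lemma Rsum_plus m f g : Rsum m (fun k => f k + g k) = Rsum m f + Rsum m g.
Proof. induction m; [unfold Rsum; simpl; ring|]. rewrite !Rsum_S, IHm. ring. Qed.

Lemma Rsum_scal m c f : Rsum m (fun k => c * f k) = c * Rsum m f.
Proof. induction m; [unfold Rsum; simpl; ring|]. rewrite !Rsum_S, IHm. ring. Qed.

Lemma Rsum_const m c : Rsum m (fun _ => c) = INR m * c.
Proof. induction m; [unfold Rsum; simpl; ring|]. rewrite Rsum_S, IHm, S_INR. ring. Qed.

Lemma Rsum_nonneg m f : (forall k, (k < m)%nat -> 0 <= f k) -> 0 <= Rsum m f.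
Proof.
  intros H. apply Rle_trans with (Rsum m (fun _ => 0)).
  - rewrite Rsum_const. lra.
  - apply Rsum_le; assumption.
Qed.

Lemma Rsum_swap m p f :
  Rsum m (fun a => Rsum p (fun b => f a b)) = Rsum p (fun b => Rsum m (fun a => f a b)).
Proof.
  induction m.
  - rewrite (Rsum_ext p _ (fun _ => 0)), Rsum_const; [unfold Rsum; simpl; ring | reflexivity].
  - rewrite Rsum_S, IHm, <- Rsum_plus. apply Rsum_ext; intros. rewrite Rsum_S. reflexivity.
Qed.

Lemma Rsum_single_le m f k :
  (forall j, (j < m)%nat -> 0 <= f j) -> (k < m)%nat -> f k <= Rsum m f.
Proof.
  induction m; intros H Hk; [lia|]. rewrite Rsum_S.
  assert (0 <= Rsum m f) by (apply Rsum_nonneg; auto).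
  destruct (Nat.eq_dec k m) as [->|]; [lra|].
  assert (f k <= Rsum m f) by (apply IHm; auto; lia).
  assert (0 <= f m) by auto. lra.
Qed.

Lemma Rsum_two_le m f a b : (forall j, (j < m)%nat -> 0 <= f j) ->
  (a < m)%nat -> (b < m)%nat -> a <> b -> f a + f b <= Rsum m f.
Proof.
  induction m; intros H Ha Hb Hab; [lia|]. rewrite Rsum_S.
  destruct (Nat.eq_dec a m) as [->|]; [assert (f b <= Rsum m f) by (apply Rsum_single_le; auto; lia); lra|].
  destruct (Nat.eq_dec b m) as [->|]; [assert (f a <= Rsum m f) by (apply Rsum_single_le; auto; lia); lra|].
  assert (f a + f b <= Rsum m f) by (apply IHm; auto; lia).
  assert (0 <= f m) by auto. lra.
Qed.

Lemma Rsum_delta m i f :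
  (i < m)%nat -> Rsum m (fun k => if Nat.eqb i k then f k else 0) = f i.
Proof.
  induction m; intros H; [lia|]. rewrite Rsum_S. destruct (Nat.eq_dec i m) as [->|].
  - rewrite Nat.eqb_refl, (Rsum_ext _ _ (fun _ => 0)), Rsum_const; [ring|].
    intros k Hk. destruct (Nat.eqb_spec m k); [lia | reflexivity].
  - rewrite IHm by lia. destruct (Nat.eqb_spec i m); [lia | ring].
Qed.

Lemma Rsum_sum_f_R0 m f : Rsum (S m) f = sum_f_R0 f m.
Proof. induction m; [unfold Rsum; simpl; ring|]. rewrite Rsum_S, IHm. reflexivity. Qed.

Lemma Csum_fst m f : fst (Csum m f) = Rsum m (fun k => fst (f k)).
Proof. induction m; [reflexivity|]. rewrite Csum_S, Rsum_S. simpl. rewrite IHm. reflexivity. Qed.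

Lemma Csum_snd m f : snd (Csum m f) = Rsum m (fun k => snd (f k)).
Proof. induction m; [reflexivity|]. rewrite Csum_S, Rsum_S. simpl. rewrite IHm. reflexivity. Qed.

Lemma Csum_mul_l m z f : Csum m (fun k => Cmul z (f k)) = Cmul z (Csum m f).
Proof. induction m; [apply C_ext; simpl; ring|]. rewrite !Csum_S, IHm. ring. Qed.

Lemma Csum_mul_r m z f : Csum m (fun k => Cmul (f k) z) = Cmul (Csum m f) z.
Proof. induction m; [apply C_ext; simpl; ring|]. rewrite !Csum_S, IHm. ring. Qed.

Lemma Csum_conj m f : Cconj (Csum m f) = Csum m (fun k => Cconj (f k)).
Proof. induction m; [apply C_ext; simpl; ring|]. rewrite !Csum_S, <- IHm. apply C_ext; simpl; ring. Qed.

Lemma Csum_swap m p f :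
  Csum m (fun a => Csum p (fun b => f a b)) = Csum p (fun b => Csum m (fun a => f a b)).
Proof.
  apply C_ext; rewrite ?Csum_fst, ?Csum_snd.
  - erewrite Rsum_ext by (intros; apply Csum_fst). rewrite Rsum_swap.
    apply Rsum_ext; intros; rewrite Csum_fst; reflexivity.
  - erewrite Rsum_ext by (intros; apply Csum_snd). rewrite Rsum_swap.
    apply Rsum_ext; intros; rewrite Csum_snd; reflexivity.
Qed.

Lemma Csum_delta m i f :
  (i < m)%nat -> Csum m (fun k => if Nat.eqb i k then f k else C0) = f i.
Proof.
  intros Hi. apply C_ext; rewrite ?Csum_fst, ?Csum_snd.
  - rewrite <- (Rsum_delta m i (fun k => fst (f k))) by assumption.
    apply Rsum_ext; intros; destruct (Nat.eqb i k); reflexivity.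
  - rewrite <- (Rsum_delta m i (fun k => snd (f k))) by assumption.
    apply Rsum_ext; intros; destruct (Nat.eqb i k); reflexivity.
Qed.

(** * Vectors *)

Definition veq (n : nat) (x y : Vec) : Prop := forall i, (i < n)%nat -> x i = y i.
Definition vadd (x y : Vec) : Vec := fun i => Cadd (x i) (y i).
Definition cscale (z : C) (x : Vec) : Vec := fun i => Cmul z (x i).
Definition vsum (m : nat) (F : nat -> Vec) : Vec := fun i => Csum m (fun c => F c i).
Definition ev (m : nat) : Vec := fun p => if Nat.eqb m p then C1 else C0.

Lemma vnorm_nonneg n x : 0 <= vnorm n x.
Proof. apply sqrt_pos. Qed.

Lemma vnorm_sq n x : vnorm n x * vnorm n x = Rsum n (fun i => Cnorm2 (x i)).
Proof. apply sqrt_sqrt, Rsum_nonneg; intros; apply Cnorm2_nonneg. Qed.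

Lemma vnorm_veq n x y : veq n x y -> vnorm n x = vnorm n y.
Proof. intros H. unfold vnorm. f_equal. apply Rsum_ext. intros; rewrite H; auto. Qed.

Lemma vnorm_zero n : vnorm n (fun _ => C0) = 0.
Proof.
  unfold vnorm. rewrite (Rsum_ext _ _ (fun _ => 0)), Rsum_const, Rmult_0_r; [apply sqrt_0|].
  intros; unfold Cnorm2; simpl; ring.
Qed.

Lemma vnorm_ev n m : (m < n)%nat -> vnorm n (ev m) = 1.
Proof.
  intros H. unfold vnorm. rewrite <- sqrt_1. f_equal.
  rewrite <- (Rsum_delta n m (fun _ => 1)) by assumption. apply Rsum_ext; intros.
  unfold ev, Cnorm2. destruct (Nat.eqb m k); simpl; ring.
Qed.

Lemma cabs_le_vnorm n x k : (k < n)%nat -> cabs (x k) <= vnorm n x.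
Proof.
  intros. apply sqrt_le_1_alt.
  apply (Rsum_single_le n (fun i => Cnorm2 (x i))); auto. intros; apply Cnorm2_nonneg.
Qed.

Lemma le_sqrt_mult_of_quadratic_nonneg a b c :
  (forall t, 0 <= a - 2 * t * b + t * t * c) -> 0 <= a -> 0 <= c -> b <= sqrt a * sqrt c.
Proof.
  intros H Ha Hc. assert (0 <= sqrt a * sqrt c) by (apply Rmult_le_pos; apply sqrt_pos).
  destruct (Rle_dec b 0); [lra|].
  destruct (Req_dec c 0) as [->|Hc0].
  - specialize (H ((a + 1) / (2 * b))).
    assert (2 * ((a + 1) / (2 * b)) * b = a + 1) by (field; lra). nra.
  - specialize (H (b / c)).
    assert (2 * (b / c) * b = 2 * (b * b / c)) by (field; lra).
    assert (b / c * (b / c) * c = b * b / c) by (field; lra).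
    assert (b * b <= a * c).
    { assert (0 <= (a - b * b / c) * c) by (apply Rmult_le_pos; lra).
      assert ((a - b * b / c) * c = a * c - b * b) by (field; lra). lra. }
    rewrite <- sqrt_mult, <- (sqrt_square b) by lra. apply sqrt_le_1_alt. assumption.
Qed.

Lemma Rsum_cauchy_schwarz m a1 a2 b1 b2 :
  Rsum m (fun k => a1 k * b1 k + a2 k * b2 k)
  <= sqrt (Rsum m (fun k => a1 k * a1 k + a2 k * a2 k))
     * sqrt (Rsum m (fun k => b1 k * b1 k + b2 k * b2 k)).
Proof.
  apply le_sqrt_mult_of_quadratic_nonneg;
    [| apply Rsum_nonneg; intros; apply Rplus_le_le_0_compat; apply Rle_0_sqr ..].
  intros t.
  assert (Hquad : forall f g h, Rsum m (fun k => f k - 2 * t * g k + t * t * h k)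
                              = Rsum m f - 2 * t * Rsum m g + t * t * Rsum m h).
  { intros. induction m; [unfold Rsum; simpl; ring|]. rewrite !Rsum_S, IHm. ring. }
  rewrite <- Hquad. apply Rle_trans with (Rsum m (fun k => (a1 k - t * b1 k) * (a1 k - t * b1 k)
                                        + (a2 k - t * b2 k) * (a2 k - t * b2 k))).
  - apply Rsum_nonneg; intros; apply Rplus_le_le_0_compat; apply Rle_0_sqr.
  - right. apply Rsum_ext; intros. ring.
Qed.

Lemma vnorm_add n x y : vnorm n (vadd x y) <= vnorm n x + vnorm n y.
Proof.
  assert (Hx := vnorm_nonneg n x). assert (Hy := vnorm_nonneg n y).
  assert (Hz := vnorm_nonneg n (vadd x y)).
  set (ip := Rsum n (fun i => fst (x i) * fst (y i) + snd (x i) * snd (y i))).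
  assert (Hcs : ip <= vnorm n x * vnorm n y) by apply Rsum_cauchy_schwarz.
  assert (vnorm n (vadd x y) * vnorm n (vadd x y)
          = vnorm n x * vnorm n x + 2 * ip + vnorm n y * vnorm n y).
  { rewrite !vnorm_sq. unfold ip. rewrite <- Rsum_scal, <- !Rsum_plus.
    apply Rsum_ext; intros. unfold vadd, Cadd, Cnorm2; simpl; ring. }
  nra.
Qed.

Lemma vnorm_vsum n m F : vnorm n (vsum m F) <= Rsum m (fun c => vnorm n (F c)).
Proof.
  induction m.
  - rewrite (vnorm_veq n _ (fun _ => C0)), vnorm_zero; [unfold Rsum; simpl; lra | intros i _; reflexivity].
  - rewrite Rsum_S. eapply Rle_trans; [|apply Rplus_le_compat_r, IHm].
    rewrite (vnorm_veq n _ (vadd (vsum m F) (F m))) by (intros i _; apply Csum_S).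
    apply vnorm_add.
Qed.

Lemma vnorm_cscale n z x : vnorm n (cscale z x) = cabs z * vnorm n x.
Proof.
  unfold vnorm, cabs. rewrite <- sqrt_mult by (apply Cnorm2_nonneg || (apply Rsum_nonneg; intros; apply Cnorm2_nonneg)).
  f_equal. rewrite <- Rsum_scal. apply Rsum_ext; intros. unfold cscale, Cnorm2, Cmul; simpl; ring.
Qed.

Lemma vsum_shift m F : vsum (S m) F = vadd (F 0%nat) (vsum m (fun j => F (S j))).
Proof. apply functional_extensionality; intro i. apply Csum_shift. Qed.

(** * Matrices acting on vectors *)

Lemma Mapply_veq n M x y : veq n x y -> Mapply n M x = Mapply n M y.
Proof.
  intros H. apply functional_extensionality; intro i. unfold Mapply.
  apply Csum_ext; intros; rewrite H; auto.
Qed.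

Lemma Mapply_Meq n M M' x : Meq n M M' -> veq n (Mapply n M x) (Mapply n M' x).
Proof. intros H i Hi. unfold Mapply. apply Csum_ext; intros; rewrite H; auto. Qed.

Lemma Mapply_Mmul n P Q x : Mapply n (Mmul n P Q) x = Mapply n P (Mapply n Q x).
Proof.
  apply functional_extensionality; intro i. unfold Mapply, Mmul.
  erewrite Csum_ext by (intros; symmetry; apply Csum_mul_r).
  rewrite Csum_swap. apply Csum_ext; intros. rewrite <- Csum_mul_l.
  apply Csum_ext; intros. ring.
Qed.

Lemma Mapply_vsum n M m F : Mapply n M (vsum m F) = vsum m (fun c => Mapply n M (F c)).
Proof.
  apply functional_extensionality; intro i. unfold Mapply, vsum.
  erewrite Csum_ext by (intros; symmetry; apply Csum_mul_l). apply Csum_swap.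
Qed.

Lemma Mapply_Msum n m F x : Mapply n (Msum m F) x = vsum m (fun c => Mapply n (F c) x).
Proof.
  apply functional_extensionality; intro i. unfold Mapply, vsum, Msum.
  erewrite Csum_ext by (intros; symmetry; apply Csum_mul_r). apply Csum_swap.
Qed.

Lemma Mapply_Mscale n z M x : Mapply n (Mscale z M) x = cscale z (Mapply n M x).
Proof.
  apply functional_extensionality; intro i. unfold Mapply, cscale, Mscale.
  rewrite <- Csum_mul_l. apply Csum_ext; intros; ring.
Qed.

Lemma Mapply_cscale n z M x : Mapply n M (cscale z x) = cscale z (Mapply n M x).
Proof.
  apply functional_extensionality; intro i. unfold Mapply, cscale.
  rewrite <- Csum_mul_l. apply Csum_ext; intros; ring.
Qed.

Lemma Mapply_Mid n x : veq n (Mapply n Mid x) x.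
Proof.
  intros i Hi. unfold Mapply, Mid. rewrite <- (Csum_delta n i x Hi).
  apply Csum_ext; intros. destruct (Nat.eqb i k); ring.
Qed.

Lemma Mapply_ev n M k : (k < n)%nat -> veq n (Mapply n M (ev k)) (fun p => M p k).
Proof.
  intros Hk p Hp. unfold Mapply, ev. rewrite <- (Csum_delta n k (fun m => M p m) Hk).
  apply Csum_ext; intros. destruct (Nat.eqb k k0); ring.
Qed.

Lemma Mapply_cols n M x : Mapply n M x = vsum n (fun k => cscale (x k) (fun i => M i k)).
Proof.
  apply functional_extensionality; intro i. unfold Mapply, vsum, cscale.
  apply Csum_ext; intros; ring.
Qed.

Lemma vnorm_Mapply_le_frobenius n M x :
  vnorm n (Mapply n M x)
  <= sqrt (Rsum n (fun k => vnorm n (fun i => M i k) * vnorm n (fun i => M i k))) * vnorm n x.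
Proof.
  rewrite Mapply_cols. eapply Rle_trans; [apply vnorm_vsum|].
  rewrite (Rsum_ext _ _ (fun k => cabs (x k) * vnorm n (fun i => M i k) + 0 * 0))
    by (intros; rewrite vnorm_cscale; ring).
  eapply Rle_trans; [apply Rsum_cauchy_schwarz|].
  rewrite Rmult_comm. right. f_equal.
  - f_equal. apply Rsum_ext; intros. ring.
  - unfold vnorm. f_equal. apply Rsum_ext; intros.
    unfold cabs. rewrite sqrt_sqrt by apply Cnorm2_nonneg. ring.
Qed.

(** * The operator norm *)

Lemma opnorm_lub n M :
  is_lub (fun r => exists x, vnorm n x <= 1 /\ r = vnorm n (Mapply n M x)) (opnorm n M).
Proof.
  unfold opnorm. apply epsilon_spec.
  set (F := sqrt (Rsum n (fun k => vnorm n (fun i => M i k) * vnorm n (fun i => M i k)))).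
  destruct (completeness (fun r => exists x, vnorm n x <= 1 /\ r = vnorm n (Mapply n M x))) as [m Hm].
  - exists F. intros r [x [Hx ->]].
    eapply Rle_trans; [apply vnorm_Mapply_le_frobenius|].
    assert (0 <= F) by apply sqrt_pos. fold F. nra.
  - exists (vnorm n (Mapply n M (fun _ => C0))), (fun _ => C0). rewrite vnorm_zero. split; lra.
  - exists m; exact Hm.
Qed.

Lemma opnorm_nonneg n M : 0 <= opnorm n M.
Proof.
  destruct (opnorm_lub n M) as [H _]. eapply Rle_trans; [|apply H].
  - apply vnorm_nonneg.
  - exists (fun _ => C0). rewrite vnorm_zero. split; [lra | reflexivity].
Qed.

Lemma opnorm_le n M c :
  0 <= c -> (forall x, vnorm n (Mapply n M x) <= c * vnorm n x) -> opnorm n M <= c.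
Proof.
  intros Hc H. destruct (opnorm_lub n M) as [_ Hlub]. apply Hlub.
  intros r [x [Hx ->]]. eapply Rle_trans; [apply H|].
  rewrite <- (Rmult_1_r c) at 2. apply Rmult_le_compat_l; assumption.
Qed.

Lemma vnorm_Mapply_le_opnorm n M x : vnorm n (Mapply n M x) <= opnorm n M * vnorm n x.
Proof.
  assert (H0 := vnorm_nonneg n x). destruct (Req_dec (vnorm n x) 0) as [Hz|Hz].
  - assert (H := vnorm_Mapply_le_frobenius n M x). rewrite Hz, Rmult_0_r in *. exact H.
  - set (s := / vnorm n x). assert (Hs : 0 < s) by (apply Rinv_0_lt_compat; lra).
    destruct (opnorm_lub n M) as [H _].
    assert (H1 : vnorm n (Mapply n M (cscale (RtoC s) x)) <= opnorm n M).
    { apply H. exists (cscale (RtoC s) x). split; [|reflexivity].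
      rewrite vnorm_cscale, cabs_RtoC, Rabs_right by lra. unfold s. right. field. assumption. }
    rewrite Mapply_cscale, vnorm_cscale, cabs_RtoC, Rabs_right in H1 by lra. unfold s in H1.
    apply Rmult_le_reg_l with (/ vnorm n x); [apply Rinv_0_lt_compat; lra|].
    replace (/ vnorm n x * (opnorm n M * vnorm n x)) with (opnorm n M) by (field; assumption).
    assumption.
Qed.

Lemma opnorm_Mscale_le n r B : 0 <= r -> opnorm n (Mscale (RtoC r) B) <= r * opnorm n B.
Proof.
  intros Hr. apply opnorm_le; [apply Rmult_le_pos; [assumption | apply opnorm_nonneg]|].
  intros x. rewrite Mapply_Mscale, vnorm_cscale, cabs_RtoC, Rabs_pos_eq, Rmult_assoc by assumption.
  apply Rmult_le_compat_l; [assumption | apply vnorm_Mapply_le_opnorm].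
Qed.

Lemma vnorm_Mapply_Mpow_le n Y k v : vnorm n (Mapply n (Mpow n Y k) v) <= opnorm n Y ^ k * vnorm n v.
Proof.
  induction k; simpl Mpow.
  - rewrite (vnorm_veq _ _ _ (Mapply_Mid n v)). simpl; lra.
  - rewrite Mapply_Mmul. eapply Rle_trans; [apply vnorm_Mapply_le_opnorm|].
    simpl. rewrite Rmult_assoc. apply Rmult_le_compat_l; [apply opnorm_nonneg | assumption].
Qed.

(** * The matrix exponential *)

Lemma exp_series x : Un_cv (fun m => sum_f_R0 (fun i => / INR (fact i) * x ^ i) m) (exp x).
Proof. unfold exp. destruct (exist_exp x) as [l Hl]. exact Hl. Qed.

Lemma Rsum_exp_le x m : 0 <= x -> Rsum (S m) (fun i => / INR (fact i) * x ^ i) <= exp x.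
Proof.
  intros Hx. rewrite Rsum_sum_f_R0. apply sum_incr; [apply exp_series|].
  intros. apply Rmult_le_pos; [left; apply Rinv_0_lt_compat, INR_fact_lt_0 | apply pow_le; assumption].
Qed.

Lemma exp_pow x k : exp x ^ k = exp (INR k * x).
Proof.
  induction k; [simpl; rewrite Rmult_0_l, exp_0; reflexivity|].
  rewrite S_INR. simpl. rewrite IHk, <- exp_plus. f_equal. ring.
Qed.

(* Stated for a real-linear projection [p] so as to treat [fst] and [snd] at once. *)
Lemma exp_series_component_cv (p : C -> R) (z : nat -> C) b :
  (forall w, Rabs (p w) <= cabs w) -> (forall r w, p (Cmul (RtoC r) w) = r * p w) ->
  (forall m f, p (Csum m f) = Rsum m (fun k => p (f k))) -> (forall j, cabs (z j) <= b ^ j) ->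
  exists L, Un_cv (fun m => p (Csum (S m) (fun j => Cmul (RtoC (/ INR (fact j))) (z j)))) L.
Proof.
  intros Hp Hscal Hsum Hz.
  set (a := fun j => / INR (fact j) * p (z j)).
  assert (Hf : forall j, 0 < / INR (fact j)) by (intros; apply Rinv_0_lt_compat, INR_fact_lt_0).
  assert (Habs : { L | Un_cv (fun m => sum_f_R0 (fun j => Rabs (a j)) m) L }).
  { apply (Rseries_CV_comp _ (fun j => / INR (fact j) * b ^ j)); [|exists (exp b); apply exp_series].
    intros j. split; [apply Rabs_pos|]. unfold a.
    rewrite Rabs_mult, Rabs_pos_eq by (left; auto).
    apply Rmult_le_compat_l; [left; auto | eapply Rle_trans; [apply Hp | apply Hz]]. }
  destruct (cv_cauchy_2 a (cauchy_abs a (cv_cauchy_1 _ Habs))) as [L HL].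
  exists L. apply (Un_cv_ext (fun m => sum_f_R0 a m)); [|exact HL].
  intros m. rewrite Hsum, Rsum_sum_f_R0. apply sum_eq; intros. unfold a. rewrite Hscal. reflexivity.
Qed.

Lemma Rlim_spec u : (exists l, Un_cv u l) -> Un_cv u (Rlim u).
Proof. intros H. unfold Rlim. apply epsilon_spec. exact H. Qed.

(* Entries are bounded by column norms: [|M i k| <= |M e_k| <= |M|]. *)
Lemma cabs_Mpow_entry_le n Y j i k : (i < n)%nat -> (k < n)%nat ->
  cabs (Mpow n Y j i k) <= opnorm n Y ^ j.
Proof.
  intros Hi Hk. eapply Rle_trans; [apply (cabs_le_vnorm n (fun p => Mpow n Y j p k) i Hi)|].
  rewrite <- (vnorm_veq _ _ _ (Mapply_ev n _ k Hk)).
  eapply Rle_trans; [apply vnorm_Mapply_Mpow_le|]. rewrite vnorm_ev by assumption. lra.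
Qed.

Definition entry_cv (n : nat) (M : nat -> Mat) (M0 : Mat) : Prop :=
  forall i k, (i < n)%nat -> (k < n)%nat ->
    Un_cv (fun m => fst (M m i k)) (fst (M0 i k)) /\ Un_cv (fun m => snd (M m i k)) (snd (M0 i k)).

Lemma exp_partial_cv n Y : entry_cv n (exp_partial n Y) (mexp n Y).
Proof.
  intros i k Hi Hk. assert (Hz := fun j => cabs_Mpow_entry_le n Y j i k Hi Hk).
  split; unfold mexp; cbn [fst snd]; apply Rlim_spec.
  - apply (exp_series_component_cv fst _ (opnorm n Y)); auto.
    + apply Rabs_fst_le_cabs.
    + intros; simpl; ring.
    + apply Csum_fst.
  - apply (exp_series_component_cv snd _ (opnorm n Y)); auto.
    + apply Rabs_snd_le_cabs.
    + intros; simpl; ring.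
    + apply Csum_snd.
Qed.

Lemma Un_cv_const c : Un_cv (fun _ => c) c.
Proof. intros eps He. exists 0%nat. intros. unfold Rdist. rewrite Rminus_diag, Rabs_R0. assumption. Qed.

Lemma Un_cv_Rsum p f L : (forall k, (k < p)%nat -> Un_cv (f k) (L k)) ->
  Un_cv (fun m => Rsum p (fun k => f k m)) (Rsum p L).
Proof.
  induction p; intros H; [unfold Rsum; simpl; apply Un_cv_const|].
  rewrite Rsum_S. apply (Un_cv_ext (fun m => Rsum p (fun k => f k m) + f p m)).
  - intros; rewrite Rsum_S; reflexivity.
  - apply CV_plus; [apply IHp; auto | apply H; lia].
Qed.

Definition vec_cv (n : nat) (u : nat -> Vec) (v : Vec) : Prop :=
  forall i, (i < n)%nat -> Un_cv (fun m => fst (u m i)) (fst (v i)) /\ Un_cv (fun m => snd (u m i)) (snd (v i)).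

Lemma vec_cv_const n v : vec_cv n (fun _ => v) v.
Proof. split; apply Un_cv_const. Qed.

Lemma entry_cv_const n M : entry_cv n (fun _ => M) M.
Proof. split; apply Un_cv_const. Qed.

Lemma vec_cv_Mapply n M M0 u v :
  entry_cv n M M0 -> vec_cv n u v -> vec_cv n (fun m => Mapply n (M m) (u m)) (Mapply n M0 v).
Proof.
  intros HM Hu i Hi. unfold Mapply. rewrite !Csum_fst, !Csum_snd.
  split; [apply (Un_cv_ext (fun m => Rsum n (fun k => fst (Cmul (M m i k) (u m k)))))
         |apply (Un_cv_ext (fun m => Rsum n (fun k => snd (Cmul (M m i k) (u m k)))))];
    try (intros; rewrite ?Csum_fst, ?Csum_snd; reflexivity);
    apply (Un_cv_Rsum n (fun k m => _ (Cmul (M m i k) (u m k)))); intros k Hk; simpl;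
    destruct (HM i k Hi Hk), (Hu k Hk); [apply CV_minus | apply CV_plus]; apply CV_mult; assumption.
Qed.

Lemma vnorm_cv n u v : vec_cv n u v -> Un_cv (fun m => vnorm n (u m)) (vnorm n v).
Proof.
  intros H. unfold vnorm. apply (continuity_seq sqrt (fun m => Rsum n (fun i => Cnorm2 (u m i)))).
  - apply continuity_pt_sqrt, Rsum_nonneg; intros; apply Cnorm2_nonneg.
  - apply (Un_cv_Rsum n (fun i m => Cnorm2 (u m i))). intros i Hi. destruct (H i Hi).
    unfold Cnorm2. apply CV_plus; apply CV_mult; assumption.
Qed.

Lemma vnorm_mexp_le_of_partials n Y P Q v K :
  (forall m, vnorm n (Mapply n P (Mapply n (exp_partial n Y m) (Mapply n Q v))) <= K) ->
  vnorm n (Mapply n P (Mapply n (mexp n Y) (Mapply n Q v))) <= K.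
Proof.
  intros H. eapply Rle_cv_lim; [exact H | | apply Un_cv_const].
  apply vnorm_cv, vec_cv_Mapply; [apply entry_cv_const|].
  apply vec_cv_Mapply; [apply exp_partial_cv | apply vec_cv_const].
Qed.

Lemma Mapply_exp_partial n Y m v : Mapply n (exp_partial n Y m) v =
  vsum (S m) (fun j => cscale (RtoC (/ INR (fact j))) (Mapply n (Mpow n Y j) v)).
Proof.
  unfold exp_partial. rewrite Mapply_Msum. f_equal.
  apply functional_extensionality; intro j. apply Mapply_Mscale.
Qed.

Lemma vnorm_exp_partial_le n Y m v :
  vnorm n (Mapply n (exp_partial n Y m) v) <= exp (opnorm n Y) * vnorm n v.
Proof.
  rewrite Mapply_exp_partial. eapply Rle_trans; [apply vnorm_vsum|].
  apply Rle_trans with (Rsum (S m) (fun j => / INR (fact j) * opnorm n Y ^ j) * vnorm n v).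
  - rewrite Rmult_comm, <- Rsum_scal. apply Rsum_le; intros j Hj.
    rewrite vnorm_cscale, cabs_inv_fact, (Rmult_comm (vnorm n v)), Rmult_assoc.
    apply Rmult_le_compat_l; [left; apply Rinv_0_lt_compat, INR_fact_lt_0 | apply vnorm_Mapply_Mpow_le].
  - apply Rmult_le_compat_r; [apply vnorm_nonneg | apply Rsum_exp_le, opnorm_nonneg].
Qed.

(** * Orthogonal resolutions of the identity *)

Definition cip (n : nat) (x y : Vec) : C := Csum n (fun i => Cmul (Cconj (x i)) (y i)).

Lemma vnorm_sq_cip n x : vnorm n x * vnorm n x = fst (cip n x x).
Proof.
  rewrite vnorm_sq. unfold cip. rewrite Csum_fst. apply Rsum_ext; intros.
  unfold Cnorm2; simpl; ring.
Qed.

Lemma cip_veq_r n x y y' : veq n y y' -> cip n x y = cip n x y'.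
Proof. intros H. unfold cip. apply Csum_ext; intros; rewrite H; auto. Qed.

Lemma cip_vsum_r n x m F : cip n x (vsum m F) = Csum m (fun c => cip n x (F c)).
Proof.
  unfold cip, vsum. erewrite Csum_ext by (intros; symmetry; apply Csum_mul_l).
  apply Csum_swap.
Qed.

Lemma cip_selfadjoint n M x y :
  Meq n (Madj M) M -> cip n x (Mapply n M y) = cip n (Mapply n M x) y.
Proof.
  intros H. unfold cip, Mapply.
  erewrite Csum_ext by (intros; symmetry; apply Csum_mul_l).
  symmetry. erewrite Csum_ext by (intros; rewrite Csum_conj; symmetry; apply Csum_mul_r).
  rewrite Csum_swap. apply Csum_ext; intros i Hi. apply Csum_ext; intros k Hk.
  rewrite Cconj_mul, <- (H i k Hi Hk). unfold Madj. ring.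
Qed.

Definition delta (a b : nat) : R := if Nat.eqb a b then 1 else 0.

Section Resolution.

Variables (n l : nat) (E : nat -> Mat).
Hypothesis E_idem : forall j, (j < l)%nat -> Meq n (Mmul n (E j) (E j)) (E j).
Hypothesis E_selfadj : forall j, (j < l)%nat -> Meq n (Madj (E j)) (E j).
Hypothesis E_sum : Meq n (Msum l E) Mid.

Lemma proj_idem_apply j y : (j < l)%nat -> veq n (Mapply n (E j) (Mapply n (E j) y)) (Mapply n (E j) y).
Proof. intros Hj. rewrite <- Mapply_Mmul. apply Mapply_Meq; auto. Qed.

Lemma resolution_apply y : veq n (vsum l (fun c => Mapply n (E c) y)) y.
Proof.
  rewrite <- Mapply_Msum. intros i Hi.
  rewrite (Mapply_Meq n _ _ y E_sum i Hi). apply Mapply_Mid; assumption.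
Qed.

Lemma vnorm_sq_proj j y : (j < l)%nat ->
  vnorm n (Mapply n (E j) y) * vnorm n (Mapply n (E j) y) = fst (cip n y (Mapply n (E j) y)).
Proof.
  intros Hj. rewrite vnorm_sq_cip, <- cip_selfadjoint by auto.
  rewrite (cip_veq_r _ _ _ _ (proj_idem_apply j y Hj)). reflexivity.
Qed.

Lemma Rsum_vnorm_sq_proj y :
  Rsum l (fun c => vnorm n (Mapply n (E c) y) * vnorm n (Mapply n (E c) y)) = vnorm n y * vnorm n y.
Proof.
  rewrite (Rsum_ext _ _ (fun c => fst (cip n y (Mapply n (E c) y)))) by (intros; apply vnorm_sq_proj; auto).
  rewrite <- Csum_fst, <- cip_vsum_r, (cip_veq_r _ _ _ _ (resolution_apply y)).
  symmetry. apply vnorm_sq_cip.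
Qed.

Lemma vnorm_proj_le j y : (j < l)%nat -> vnorm n (Mapply n (E j) y) <= vnorm n y.
Proof.
  intros Hj.
  assert (vnorm n (Mapply n (E j) y) * vnorm n (Mapply n (E j) y) <= vnorm n y * vnorm n y).
  { rewrite <- (Rsum_vnorm_sq_proj y).
    apply (Rsum_single_le l (fun c => vnorm n (Mapply n (E c) y) * vnorm n (Mapply n (E c) y)));
      [intros; apply Rle_0_sqr | assumption]. }
  assert (H1 := vnorm_nonneg n y). assert (H2 := vnorm_nonneg n (Mapply n (E j) y)). nra.
Qed.

(* [E a y] is fixed by [E a], so the Pythagorean identity leaves no room for [E b (E a y)]. *)
Lemma vnorm_proj_proj_neq a b y : (a < l)%nat -> (b < l)%nat -> a <> b ->
  vnorm n (Mapply n (E b) (Mapply n (E a) y)) = 0.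
Proof.
  intros Ha Hb Hab. set (v := Mapply n (E a) y).
  assert (H := Rsum_two_le l (fun c => vnorm n (Mapply n (E c) v) * vnorm n (Mapply n (E c) v)) a b
                 ltac:(intros; apply Rle_0_sqr) Ha Hb Hab). cbv beta in H.
  rewrite Rsum_vnorm_sq_proj in H.
  assert (Hv : vnorm n (Mapply n (E a) v) = vnorm n v) by (apply vnorm_veq, proj_idem_apply; assumption).
  assert (H3 := vnorm_nonneg n (Mapply n (E b) v)). nra.
Qed.

Lemma vnorm_proj_proj_le a b y : (a < l)%nat -> (b < l)%nat ->
  vnorm n (Mapply n (E a) (Mapply n (E b) y)) <= delta a b * vnorm n y.
Proof.
  intros Ha Hb. unfold delta. destruct (Nat.eqb_spec a b) as [<-|Hab].
  - rewrite Rmult_1_l. eapply Rle_trans; apply vnorm_proj_le; assumption.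
  - rewrite vnorm_proj_proj_neq by auto. lra.
Qed.

(* [sum_m |E_j e_m|^2] is the trace of [E_j]: at least 1 for [E_j <> 0], and summing to [n] over [j]. *)
Lemma trace_proj_ge_1 j i k : (j < l)%nat -> (i < n)%nat -> (k < n)%nat -> E j i k <> C0 ->
  1 <= Rsum n (fun m => vnorm n (fun p => E j p m) * vnorm n (fun p => E j p m)).
Proof.
  intros Hj Hi Hk Hnz. set (v := Mapply n (E j) (ev k)).
  set (T := Rsum n (fun m => vnorm n (fun p => E j p m) * vnorm n (fun p => E j p m))).
  assert (HT : 0 <= T) by (apply Rsum_nonneg; intros; apply Rle_0_sqr).
  assert (Hv : 0 < vnorm n v).
  { apply sqrt_lt_R0. eapply Rlt_le_trans; [|apply (Rsum_single_le n (fun p => Cnorm2 (v p)) i)].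
    - unfold v. rewrite (Mapply_ev n (E j) k Hk i Hi). apply Cnorm2_pos; assumption.
    - intros; apply Cnorm2_nonneg.
    - assumption. }
  assert (vnorm n v <= sqrt T * vnorm n v).
  { assert (Hfix : vnorm n (Mapply n (E j) v) = vnorm n v)
      by (apply vnorm_veq, proj_idem_apply; assumption).
    rewrite <- Hfix at 1. apply vnorm_Mapply_le_frobenius. }
  assert (1 <= sqrt T) by nra.
  rewrite <- (sqrt_sqrt T) by assumption. nra.
Qed.

Lemma card_resolution_le (E_nz : forall j, (j < l)%nat -> exists i k, (i < n)%nat /\ (k < n)%nat /\ E j i k <> C0) :
  (l <= n)%nat.
Proof.
  apply INR_le. rewrite <- (Rmult_1_r (INR l)), <- Rsum_const.
  apply Rle_trans with
    (Rsum l (fun j => Rsum n (fun m => vnorm n (fun p => E j p m) * vnorm n (fun p => E j p m)))).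
  - apply Rsum_le; intros j Hj. destruct (E_nz j Hj) as [i [k [Hi [Hk Hne]]]].
    apply (trace_proj_ge_1 j i k); assumption.
  - rewrite Rsum_swap, <- (Rmult_1_r (INR n)), <- (Rsum_const n 1). right.
    apply Rsum_ext; intros m Hm.
    replace 1 with (vnorm n (ev m) * vnorm n (ev m)) by (rewrite vnorm_ev by assumption; ring).
    rewrite <- Rsum_vnorm_sq_proj.
    apply Rsum_ext; intros j Hj. rewrite (vnorm_veq _ _ _ (Mapply_ev n (E j) m Hm)). reflexivity.
Qed.

Lemma vnorm_block_exp_partial_le Y m a b y : (a < l)%nat -> (b < l)%nat ->
  vnorm n (Mapply n (E a) (Mapply n (exp_partial n Y m) (Mapply n (E b) y)))
  <= (delta a b + (exp (opnorm n Y) - 1)) * vnorm n y.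
Proof.
  intros Ha Hb. set (w := Mapply n (E b) y).
  assert (Hw : vnorm n w <= vnorm n y) by (apply vnorm_proj_le; assumption).
  assert (Hf : forall j, 0 < / INR (fact j)) by (intros; apply Rinv_0_lt_compat, INR_fact_lt_0).
  rewrite Mapply_exp_partial, Mapply_vsum, vsum_shift.
  eapply Rle_trans; [apply vnorm_add|]. rewrite Rmult_plus_distr_r. apply Rplus_le_compat.
  - rewrite Mapply_cscale, vnorm_cscale, cabs_inv_fact. simpl. rewrite Rinv_1, Rmult_1_l.
    rewrite (Mapply_veq _ _ _ _ (Mapply_Mid n w)). apply vnorm_proj_proj_le; assumption.
  - eapply Rle_trans; [apply vnorm_vsum|].
    apply Rle_trans with
      (Rsum m (fun j => / INR (fact (S j)) * opnorm n Y ^ S j) * vnorm n y).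
    + rewrite Rmult_comm, <- Rsum_scal. apply Rsum_le; intros j Hj.
      eapply Rle_trans; [apply vnorm_proj_le; assumption|].
      rewrite vnorm_cscale, cabs_inv_fact, (Rmult_comm (vnorm n y)), Rmult_assoc.
      apply Rmult_le_compat_l; [left; apply Hf|].
      eapply Rle_trans; [apply vnorm_Mapply_Mpow_le|].
      apply Rmult_le_compat_l; [apply pow_le, opnorm_nonneg | assumption].
    + apply Rmult_le_compat_r; [apply vnorm_nonneg|].
      assert (H := Rsum_exp_le (opnorm n Y) m (opnorm_nonneg n Y)).
      rewrite Rsum_shift in H.
      assert (/ INR (fact 0) * opnorm n Y ^ 0 = 1) by (simpl; field). lra.
Qed.

Lemma vnorm_block_mexp_le Y a b y : (a < l)%nat -> (b < l)%nat ->
  vnorm n (Mapply n (E a) (Mapply n (mexp n Y) (Mapply n (E b) y)))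
  <= (delta a b + (exp (opnorm n Y) - 1)) * vnorm n y.
Proof. intros; apply vnorm_mexp_le_of_partials; intros; apply vnorm_block_exp_partial_le; assumption. Qed.

Lemma opnorm_Mword_single_le Y a : (a < l)%nat ->
  opnorm n (Mword n E (mexp n Y) [a]) <= exp (opnorm n Y).
Proof.
  intros Ha. apply opnorm_le; [left; apply exp_pos|]. intros x.
  simpl Mword. rewrite !Mapply_Mmul. apply vnorm_mexp_le_of_partials. intros m.
  eapply Rle_trans; [apply vnorm_proj_le; assumption|].
  eapply Rle_trans; [apply vnorm_exp_partial_le|].
  rewrite (vnorm_veq _ _ _ (Mapply_Mid n x)). lra.
Qed.

(* [Mword (b :: r)] starts with the idempotent [E b], which can be duplicated to form a block. *)
Lemma opnorm_Mword_cons2_le Y a b r : (a < l)%nat -> (b < l)%nat ->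
  opnorm n (Mword n E (mexp n Y) (a :: b :: r))
  <= (delta a b + (exp (opnorm n Y) - 1)) * opnorm n (Mword n E (mexp n Y) (b :: r)).
Proof.
  intros Ha Hb. set (X := mexp n Y).
  assert (Hq : 0 <= delta a b + (exp (opnorm n Y) - 1)).
  { assert (H := exp_ineq1_le (opnorm n Y)). assert (H0 := opnorm_nonneg n Y).
    unfold delta; destruct (Nat.eqb a b); lra. }
  apply opnorm_le; [apply Rmult_le_pos; [assumption | apply opnorm_nonneg]|]. intros x.
  set (W := Mapply n (Mword n E X (b :: r)) x).
  change (Mword n E X (a :: b :: r)) with (Mmul n (Mmul n (E a) X) (Mword n E X (b :: r))).
  rewrite !Mapply_Mmul. fold W.
  assert (HW : veq n W (Mapply n (E b) W)).
  { intros i Hi. symmetry. unfold W. simpl Mword. rewrite !Mapply_Mmul.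
    apply proj_idem_apply; assumption. }
  rewrite (Mapply_veq _ _ _ _ HW), Rmult_assoc.
  eapply Rle_trans; [apply vnorm_block_mexp_le; assumption|].
  apply Rmult_le_compat_l; [assumption | apply vnorm_Mapply_le_opnorm].
Qed.

End Resolution.

(** * Summing over words *)

Definition lsum {A} (f : A -> R) (L : list A) : R := fold_right (fun x acc => f x + acc) 0 L.

Lemma lsum_app {A} (f : A -> R) L1 L2 : lsum f (L1 ++ L2) = lsum f L1 + lsum f L2.
Proof. induction L1; simpl; [ring|]. unfold lsum in *; simpl. rewrite IHL1. ring. Qed.

Lemma lsum_flat_map {A B} (f : B -> R) (G : A -> list B) s :
  lsum f (flat_map G s) = lsum (fun a => lsum f (G a)) s.
Proof. induction s; simpl; [reflexivity|]. rewrite lsum_app, IHs. reflexivity. Qed.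

Lemma lsum_map {A B} (f : B -> R) (h : A -> B) L : lsum f (map h L) = lsum (fun x => f (h x)) L.
Proof. induction L; simpl; [reflexivity|]. unfold lsum in *; simpl. rewrite IHL. reflexivity. Qed.

Lemma lsum_le {A} (f g : A -> R) L : (forall x, f x <= g x) -> lsum f L <= lsum g L.
Proof. intros H. induction L; simpl; [unfold lsum; simpl; lra|]. unfold lsum in *; simpl. specialize (H a). lra. Qed.

Lemma lsum_scal {A} c (f : A -> R) L : lsum (fun x => c * f x) L = c * lsum f L.
Proof. induction L; unfold lsum in *; simpl; [ring|]. rewrite IHL. ring. Qed.

Lemma lsum_all_tuples_S l m (f : list nat -> R) :
  lsum f (all_tuples l (S m)) = Rsum l (fun a => lsum (fun r => f (a :: r)) (all_tuples l m)).
Proof.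
  simpl all_tuples. rewrite lsum_flat_map.
  apply Rsum_ext; intros. apply lsum_map.
Qed.

(* A transfer-matrix estimate: the row sums of the weights [delta a b + c] are [1 + l c]. *)
Lemma lsum_all_tuples_le l (w : list nat -> R) g c : 0 <= c ->
  (forall a, (a < l)%nat -> w [a] <= g) ->
  (forall a b r, (a < l)%nat -> (b < l)%nat -> w (a :: b :: r) <= (delta a b + c) * w (b :: r)) ->
  forall m a, (a < l)%nat -> lsum (fun r => w (a :: r)) (all_tuples l m) <= g * (1 + INR l * c) ^ m.
Proof.
  intros Hc Hbase Hstep m. induction m as [|m IH]; intros a Ha.
  - unfold lsum; simpl. rewrite Rplus_0_r, Rmult_1_r. apply Hbase; assumption.
  - rewrite lsum_all_tuples_S.
    apply Rle_trans with (Rsum l (fun b => (delta a b + c) * (g * (1 + INR l * c) ^ m))).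
    + apply Rsum_le; intros b Hb.
      eapply Rle_trans; [apply lsum_le; intros r; apply Hstep; assumption|].
      rewrite lsum_scal. apply Rmult_le_compat_l; [|apply IH; assumption].
      unfold delta; destruct (Nat.eqb a b); lra.
    + right. rewrite (Rsum_ext _ _ (fun b => (if Nat.eqb a b then g * (1 + INR l * c) ^ m else 0)
                                     + c * (g * (1 + INR l * c) ^ m))).
      * rewrite Rsum_plus, Rsum_delta, Rsum_const by assumption. simpl. ring.
      * intros b _. unfold delta. destruct (Nat.eqb a b); ring.
Qed.

Lemma pow_1_plus_ge t k : 0 <= t -> 1 + INR k * t <= (1 + t) ^ k.
Proof.
  intros Ht. induction k; [simpl; lra|].
  rewrite S_INR. simpl. assert (0 <= INR k * t * t) by (apply Rmult_le_pos; [apply Rmult_le_pos; [apply pos_INR|]|]; assumption).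
  nra.
Qed.

(* [1 + l (e^b - 1) <= e^(l b)], and [l e^b (e^(l b))^(N-1) = l e^(l b N)] once [l >= 1]. *)
Lemma word_sum_estimate n l b bB N : (l <= n)%nat -> 0 <= b -> b * INR (S N) <= bB ->
  INR l * (exp b * (1 + INR l * (exp b - 1)) ^ N) <= INR n * exp (INR n * bB).
Proof.
  intros Hln Hb HbB.
  assert (Hexp : 0 <= exp b - 1) by (assert (H := exp_ineq1_le b); lra).
  destruct l as [|l']; [simpl; rewrite Rmult_0_l; apply Rmult_le_pos; [apply pos_INR | left; apply exp_pos]|].
  assert (Hl : 1 <= INR (S l')) by (apply (le_INR 1); lia).
  assert (HlnR : INR (S l') <= INR n) by (apply le_INR; assumption).
  apply Rmult_le_compat; [apply pos_INR | | assumption |].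
  { apply Rmult_le_pos; [left; apply exp_pos | apply pow_le]. nra. }
  apply Rle_trans with (exp b * exp (INR (S l') * b) ^ N).
  { apply Rmult_le_compat_l; [left; apply exp_pos|].
    apply pow_incr. split; [nra|].
    rewrite <- exp_pow. replace (exp b) with (1 + (exp b - 1)) at 2 by ring.
    apply pow_1_plus_ge; assumption. }
  rewrite exp_pow, <- exp_plus.
  assert (Hexponent : b + INR N * (INR (S l') * b) <= INR n * bB).
  { rewrite S_INR in HbB, Hl, HlnR |- *.
    assert (0 <= INR N) by apply pos_INR. assert (0 <= INR l') by apply pos_INR.
    assert (0 <= b * (INR N + 1)) by (apply Rmult_le_pos; lra).
    assert ((INR l' + 1) * (b * (INR N + 1)) <= INR n * (b * (INR N + 1)))
      by (apply Rmult_le_compat_r; assumption).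
    assert (INR n * (b * (INR N + 1)) <= INR n * bB) by (apply Rmult_le_compat_l; lra).
    assert (0 <= INR l' * b) by (apply Rmult_le_pos; assumption). nra. }
  destruct Hexponent as [Hlt | ->]; [left; apply exp_increasing; assumption | right; reflexivity].
Qed.

Theorem lemma6p1 (n : nat) (A B : Mat) (N : nat) (l : nat)
  (lam : nat -> R) (E : nat -> Mat)
  (hA : hermitian n A)
  (hN : (1 <= N)%nat)
  (hdist : forall j k, (j < l)%nat -> (k < l)%nat -> j <> k -> lam j <> lam k)
  (hproj : forall j, (j < l)%nat -> Meq n (Mmul n (E j) (E j)) (E j))
  (hself : forall j, (j < l)%nat -> Meq n (Madj (E j)) (E j))
  (hnz : forall j, (j < l)%nat -> exists i k, (i < n)%nat /\ (k < n)%nat /\ E j i k <> C0)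
  (heig : forall j, (j < l)%nat -> Meq n (Mmul n A (E j)) (Mscale (RtoC (lam j)) (E j)))
  (hsum : Meq n (Msum l E) Mid) :
  sum_norms n l E (mexp n (Mscale (RtoC (/ INR N)) B)) N
    <= INR n * exp (INR n * opnorm n B).
Proof.
  set (Y := Mscale (RtoC (/ INR N)) B). set (b := opnorm n Y).
  assert (HN : 0 < INR N) by (apply lt_0_INR; lia).
  assert (HbB : b * INR N <= opnorm n B).
  { assert (H := opnorm_Mscale_le n (/ INR N) B ltac:(left; apply Rinv_0_lt_compat; exact HN)).
    change (b <= / INR N * opnorm n B) in H.
    apply Rle_trans with (/ INR N * opnorm n B * INR N);
      [apply Rmult_le_compat_r; lra | right; field; lra]. }
  destruct N as [|N]; [lia|].
  assert (Hwords : forall a, (a < l)%nat ->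
            lsum (fun r => opnorm n (Mword n E (mexp n Y) (a :: r))) (all_tuples l N)
            <= exp b * (1 + INR l * (exp b - 1)) ^ N).
  { apply (lsum_all_tuples_le l (fun ks => opnorm n (Mword n E (mexp n Y) ks))).
    - assert (H := exp_ineq1_le b). assert (0 <= b) by apply opnorm_nonneg. lra.
    - intros a Ha. apply opnorm_Mword_single_le with l; assumption.
    - intros a b' r Ha Hb. apply opnorm_Mword_cons2_le with l; assumption. }
  unfold sum_norms. fold (lsum (fun ks => opnorm n (Mword n E (mexp n Y) ks)) (all_tuples l (S N))).
  rewrite lsum_all_tuples_S.
  eapply Rle_trans; [apply Rsum_le; exact Hwords|]. rewrite Rsum_const.
  apply word_sum_estimate; [apply card_resolution_le with E | apply opnorm_nonneg | ]; assumption.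
Qed.
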